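(* $\operatorname{RBM}_{3,2}\subseteq\mathcal{M}_{3,3}$.
   Context: A distribution of three binary random variables is a $2\times2\times2$ tensor $p=(p_{ijk})_{i,j,k\in\{0,1\}}$ with nonnegative entries summing to $1$; the set of these is the simplex $\Delta_7$. For $a,b,c\in\mathbb{R}^2_{\ge0}$, $a\otimes b\otimes c$ is the tensor with entries $a_ib_jc_k$. $\mathcal{M}_{3,3}$ is the set of $p\in\Delta_7$ that are a sum of three tensors of the form $a\otimes b\otimes c$ with $a,b,c\in\mathbb{R}^2_{\ge0}$. $\operatorname{RBM}_{3,2}$ is the set of $p\in\Delta_7$ of the form $p=(a_1\otimes b_1\otimes c_1+d_1\otimes e_1\otimes f_1)*(a_2\otimes b_2\otimes c_2+d_2\otimes e_2\otimes f_2)$ with all vectors in $\mathbb{R}^2_{\ge0}$, where $*$ is the entrywise (Hadamard) product. *)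

From Stdlib Require Import Reals.
Open Scope R_scope.

(* A vector in R^2, indexed by {0,1} encoded as bool (false = 0, true = 1). *)
Definition vec2 := bool -> R.
Definition tensor222 := bool -> bool -> bool -> R.

Definition nonneg2 (a : vec2) : Prop := 0 <= a false /\ 0 <= a true.

Definition outer3 (a b c : vec2) : tensor222 := fun i j k => a i * b j * c k.

Definition tadd (p q : tensor222) : tensor222 := fun i j k => p i j k + q i j k.
Definition thad (p q : tensor222) : tensor222 := fun i j k => p i j k * q i j k.

Definition in_simplex (p : tensor222) : Prop :=
  (forall i j k, 0 <= p i j k) /\
  p false false false + p false false true + p false true false + p false true true
  + p true false false + p true false true + p true true false + p true true true = 1.

Definition in_M33 (p : tensor222) : Prop :=
  in_simplex p /\
  exists a1 b1 c1 a2 b2 c2 a3 b3 c3 : vec2,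
    nonneg2 a1 /\ nonneg2 b1 /\ nonneg2 c1 /\
    nonneg2 a2 /\ nonneg2 b2 /\ nonneg2 c2 /\
    nonneg2 a3 /\ nonneg2 b3 /\ nonneg2 c3 /\
    p = tadd (outer3 a1 b1 c1) (tadd (outer3 a2 b2 c2) (outer3 a3 b3 c3)).

Definition in_RBM32 (p : tensor222) : Prop :=
  in_simplex p /\
  exists a1 b1 c1 d1 e1 f1 a2 b2 c2 d2 e2 f2 : vec2,
    nonneg2 a1 /\ nonneg2 b1 /\ nonneg2 c1 /\
    nonneg2 d1 /\ nonneg2 e1 /\ nonneg2 f1 /\
    nonneg2 a2 /\ nonneg2 b2 /\ nonneg2 c2 /\
    nonneg2 d2 /\ nonneg2 e2 /\ nonneg2 f2 /\
    p = thad (tadd (outer3 a1 b1 c1) (outer3 d1 e1 f1))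
             (tadd (outer3 a2 b2 c2) (outer3 d2 e2 f2)).

(* Write the slices of a nonnegative 2x2x2 tensor along the third index as 2x2 matrices.  If all
   slice determinants have the same sign, each slice is a nonnegative rank-one matrix plus a
   nonnegative multiple of the (0,0) entry (after possibly swapping columns); the two corner
   terms together form the rank-one tensor e_0⊗e_0⊗(t_0,t_1), so the tensor is a sum of three
   nonnegative rank-one tensors.  A slice of a rank-two tensor a⊗b⊗c + d⊗e⊗f has
   determinant c_k f_k [a,d][b,e], where [x,y] is the 2x2 minor of x and y; nonnegative matrices
   whose determinants are >= 0 (resp. <= 0) are closed under Hadamard products.  Hence an RBM
   tensor is in M_{3,3} as soon as [a1,d1][b1,e1][a2,d2][b2,e2] >= 0, and the same holds for the
   other two ways of choosing the slicing mode.  The three corresponding products multiply to a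
   square, so they cannot all be negative. *)

From Stdlib Require Import Reals Lra Psatz FunctionalExtensionality.
Open Scope R_scope.

Definition vec2_of (x y : R) : vec2 := fun b => if b then y else x.

Definition minor2 (a d : vec2) : R := a false * d true - a true * d false.

Definition slice_det (p : tensor222) (k : bool) : R :=
  p false false k * p true true k - p false true k * p true false k.

Definition sum3_outer (p : tensor222) : Prop :=
  exists a1 b1 c1 a2 b2 c2 a3 b3 c3 : vec2,
    nonneg2 a1 /\ nonneg2 b1 /\ nonneg2 c1 /\
    nonneg2 a2 /\ nonneg2 b2 /\ nonneg2 c2 /\
    nonneg2 a3 /\ nonneg2 b3 /\ nonneg2 c3 /\
    p = tadd (outer3 a1 b1 c1) (tadd (outer3 a2 b2 c2) (outer3 a3 b3 c3)).

Ltac tensor_ext :=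
  apply functional_extensionality; intro i;
  apply functional_extensionality; intro j;
  apply functional_extensionality; intro k.

Lemma outer3_nonneg (a b c : vec2) i j k :
  nonneg2 a -> nonneg2 b -> nonneg2 c -> 0 <= outer3 a b c i j k.
Proof.
  intros [? ?] [? ?] [? ?]; unfold outer3.
  destruct i, j, k; repeat apply Rmult_le_pos; assumption.
Qed.

Lemma tadd_outer3_nonneg (a b c d e f : vec2) i j k :
  nonneg2 a -> nonneg2 b -> nonneg2 c -> nonneg2 d -> nonneg2 e -> nonneg2 f ->
  0 <= tadd (outer3 a b c) (outer3 d e f) i j k.
Proof. intros; apply Rplus_le_le_0_compat; apply outer3_nonneg; assumption. Qed.

(* The correction term [t] sits in the (0,0) corner: [s00 - s01 s10 / s11 >= 0] is the
   determinant condition. *)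
Lemma nonneg_matrix_rank1_plus_corner (s00 s01 s10 s11 : R) :
  0 <= s00 -> 0 <= s01 -> 0 <= s10 -> 0 <= s11 -> s01 * s10 <= s00 * s11 ->
  exists x0 x1 y0 y1 t, 0 <= x0 /\ 0 <= x1 /\ 0 <= y0 /\ 0 <= y1 /\ 0 <= t /\
    s00 = x0 * y0 + t /\ s01 = x0 * y1 /\ s10 = x1 * y0 /\ s11 = x1 * y1.
Proof.
  intros H00 H01 H10 H11 Hdet.
  destruct (Rle_lt_or_eq_dec 0 s11 H11) as [Hpos|<-].
  - exists (s01 / s11), 1, s10, s11, (s00 - s01 * s10 / s11).
    assert (0 <= s01 / s11) by (apply Rmult_le_pos; [lra | left; apply Rinv_0_lt_compat; lra]).
    assert (s01 * s10 / s11 <= s00).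
    { apply (Rmult_le_reg_r s11); [lra|]. field_simplify; lra. }
    repeat split; try lra; field; lra.
  - assert (Hzero : s01 * s10 = 0) by nra.
    destruct (Rmult_integral _ _ Hzero) as [->| ->].
    + exists 0, 1, s10, 0, s00; repeat split; lra.
    + exists 1, 0, 0, s01, s00; repeat split; lra.
Qed.

Lemma sum3_outer_of_slice_det_nonneg (p : tensor222) :
  (forall i j k, 0 <= p i j k) -> (forall k, 0 <= slice_det p k) -> sum3_outer p.
Proof.
  intros Hp Hdet; unfold slice_det in Hdet.
  destruct (nonneg_matrix_rank1_plus_corner
              (p false false false) (p false true false) (p true false false) (p true true false))
    as (x0 & x1 & y0 & y1 & t & ? & ? & ? & ? & ? & E00 & E01 & E10 & E11);
    try apply Hp; try (specialize (Hdet false); lra).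
  destruct (nonneg_matrix_rank1_plus_corner
              (p false false true) (p false true true) (p true false true) (p true true true))
    as (u0 & u1 & v0 & v1 & s & ? & ? & ? & ? & ? & F00 & F01 & F10 & F11);
    try apply Hp; try (specialize (Hdet true); lra).
  exists (vec2_of 1 0), (vec2_of 1 0), (vec2_of t s),
         (vec2_of x0 x1), (vec2_of y0 y1), (vec2_of 1 0),
         (vec2_of u0 u1), (vec2_of v0 v1), (vec2_of 0 1).
  repeat split; simpl; try lra.
  tensor_ext; destruct i, j, k; unfold tadd, outer3, vec2_of; lra.
Qed.

Lemma sum3_outer_flip2 (p q : tensor222) :
  sum3_outer q -> (forall i j k, p i j k = q i (negb j) k) -> sum3_outer p.
Proof.
  intros (x1 & y1 & z1 & x2 & y2 & z2 & x3 & y3 & z3 &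
          Hx1 & [? ?] & Hz1 & Hx2 & [? ?] & Hz2 & Hx3 & [? ?] & Hz3 & E) Hpq.
  exists x1, (fun j => y1 (negb j)), z1, x2, (fun j => y2 (negb j)), z2,
         x3, (fun j => y3 (negb j)), z3.
  repeat (split; [first [assumption | split; assumption] |]).
  tensor_ext; rewrite Hpq, E; reflexivity.
Qed.

Lemma sum3_outer_swap23 (p q : tensor222) :
  sum3_outer q -> (forall i j k, p i j k = q i k j) -> sum3_outer p.
Proof.
  intros (x1 & y1 & z1 & x2 & y2 & z2 & x3 & y3 & z3 & ? & ? & ? & ? & ? & ? & ? & ? & ? & E) Hpq.
  exists x1, z1, y1, x2, z2, y2, x3, z3, y3; repeat (split; [assumption|]).
  tensor_ext; rewrite Hpq, E; unfold tadd, outer3; ring.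
Qed.

Lemma sum3_outer_cycle (p q : tensor222) :
  sum3_outer q -> (forall i j k, p i j k = q j k i) -> sum3_outer p.
Proof.
  intros (x1 & y1 & z1 & x2 & y2 & z2 & x3 & y3 & z3 & ? & ? & ? & ? & ? & ? & ? & ? & ? & E) Hpq.
  exists z1, x1, y1, z2, x2, y2, z3, x3, y3; repeat (split; [assumption|]).
  tensor_ext; rewrite Hpq, E; unfold tadd, outer3; ring.
Qed.

Lemma sum3_outer_of_slice_det_nonpos (p : tensor222) :
  (forall i j k, 0 <= p i j k) -> (forall k, slice_det p k <= 0) -> sum3_outer p.
Proof.
  intros Hp Hdet.
  apply (sum3_outer_flip2 p (fun i j k => p i (negb j) k)); [|now intros ? [] ?].
  apply sum3_outer_of_slice_det_nonneg; [intros; apply Hp|].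
  intro k; specialize (Hdet k); unfold slice_det in *; simpl; lra.
Qed.

Lemma slice_det_thad_nonneg (p q : tensor222) k :
  (forall i j, 0 <= p i j k) -> (forall i j, 0 <= q i j k) ->
  0 <= slice_det p k -> 0 <= slice_det q k -> 0 <= slice_det (thad p q) k.
Proof.
  intros Hp Hq Hdp Hdq; unfold slice_det, thad in *.
  enough (p false true k * p true false k * (q false true k * q true false k)
          <= p false false k * p true true k * (q false false k * q true true k)) by nra.
  apply Rmult_le_compat; try lra; apply Rmult_le_pos; auto.
Qed.

Lemma slice_det_thad_nonpos (p q : tensor222) k :
  (forall i j, 0 <= p i j k) -> (forall i j, 0 <= q i j k) ->
  slice_det p k <= 0 -> slice_det q k <= 0 -> slice_det (thad p q) k <= 0.
Proof.
  intros Hp Hq Hdp Hdq; unfold slice_det, thad in *.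
  enough (p false false k * p true true k * (q false false k * q true true k)
          <= p false true k * p true false k * (q false true k * q true false k)) by nra.
  apply Rmult_le_compat; try lra; apply Rmult_le_pos; auto.
Qed.

Lemma same_sign_of_mul_nonneg (u v : R) :
  0 <= u * v -> (0 <= u /\ 0 <= v) \/ (u <= 0 /\ v <= 0).
Proof.
  intro Huv.
  destruct (Rle_or_lt 0 u), (Rle_or_lt 0 v); try (left; lra); try (right; lra);
    [assert (u = 0) by nra | assert (v = 0) by nra]; right; lra.
Qed.

Lemma slice_det_rank2 (a b c d e f : vec2) k :
  slice_det (tadd (outer3 a b c) (outer3 d e f)) k = c k * f k * (minor2 a d * minor2 b e).
Proof. unfold slice_det, tadd, outer3, minor2; ring. Qed.

Lemma sum3_outer_rbm (a1 b1 c1 d1 e1 f1 a2 b2 c2 d2 e2 f2 : vec2) :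
  nonneg2 a1 -> nonneg2 b1 -> nonneg2 c1 -> nonneg2 d1 -> nonneg2 e1 -> nonneg2 f1 ->
  nonneg2 a2 -> nonneg2 b2 -> nonneg2 c2 -> nonneg2 d2 -> nonneg2 e2 -> nonneg2 f2 ->
  0 <= (minor2 a1 d1 * minor2 b1 e1) * (minor2 a2 d2 * minor2 b2 e2) ->
  sum3_outer (thad (tadd (outer3 a1 b1 c1) (outer3 d1 e1 f1))
                   (tadd (outer3 a2 b2 c2) (outer3 d2 e2 f2))).
Proof.
  intros Ha1 Hb1 Hc1 Hd1 He1 Hf1 Ha2 Hb2 Hc2 Hd2 He2 Hf2 Hsign.
  set (p1 := tadd (outer3 a1 b1 c1) (outer3 d1 e1 f1)).
  set (p2 := tadd (outer3 a2 b2 c2) (outer3 d2 e2 f2)).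
  assert (Hp1 : forall i j k, 0 <= p1 i j k) by (intros; now apply tadd_outer3_nonneg).
  assert (Hp2 : forall i j k, 0 <= p2 i j k) by (intros; now apply tadd_outer3_nonneg).
  assert (Hcf1 : forall k, 0 <= c1 k * f1 k) by (intros []; apply Rmult_le_pos; apply Hc1 || apply Hf1).
  assert (Hcf2 : forall k, 0 <= c2 k * f2 k) by (intros []; apply Rmult_le_pos; apply Hc2 || apply Hf2).
  assert (Hnn : forall i j k, 0 <= thad p1 p2 i j k)
    by (intros; apply Rmult_le_pos; auto).
  destruct (same_sign_of_mul_nonneg _ _ Hsign) as [[Hu Hv]|[Hu Hv]].
  - apply sum3_outer_of_slice_det_nonneg; [exact Hnn|intro k].
    apply slice_det_thad_nonneg; auto; unfold p1, p2; rewrite slice_det_rank2;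
      apply Rmult_le_pos; auto.
  - apply sum3_outer_of_slice_det_nonpos; [exact Hnn|intro k].
    apply slice_det_thad_nonpos; auto; unfold p1, p2; rewrite slice_det_rank2;
      specialize (Hcf1 k); specialize (Hcf2 k); nra.
Qed.

Lemma prod3_square_not_all_neg (x y z w : R) :
  x * y * z = w * w -> 0 <= x \/ 0 <= y \/ 0 <= z.
Proof.
  intro E.
  destruct (Rle_or_lt 0 x); [now left|]; destruct (Rle_or_lt 0 y); [right; now left|].
  right; right.
  assert (Hxy : 0 < x * y) by nra.
  pose proof (Rle_0_sqr w) as Hw; unfold Rsqr in Hw; nra.
Qed.

Theorem mainTheorem4 : forall p : tensor222, in_RBM32 p -> in_M33 p.
Proof.
  intros p (Hs & a1 & b1 & c1 & d1 & e1 & f1 & a2 & b2 & c2 & d2 & e2 & f2 &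
    Ha1 & Hb1 & Hc1 & Hd1 & He1 & Hf1 & Ha2 & Hb2 & Hc2 & Hd2 & He2 & Hf2 & E).
  split; [exact Hs|]; change (sum3_outer p); subst p.
  set (A1 := minor2 a1 d1); set (B1 := minor2 b1 e1); set (C1 := minor2 c1 f1);
  set (A2 := minor2 a2 d2); set (B2 := minor2 b2 e2); set (C2 := minor2 c2 f2).
  destruct (prod3_square_not_all_neg ((A1 * B1) * (A2 * B2)) ((A1 * C1) * (A2 * C2))
              ((B1 * C1) * (B2 * C2)) (A1 * B1 * C1 * A2 * B2 * C2)) as [H|[H|H]];
    [ring| | |].
  - now apply sum3_outer_rbm.
  - eapply sum3_outer_swap23; [now apply (sum3_outer_rbm a1 c1 b1 d1 f1 e1 a2 c2 b2 d2 f2 e2)|].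
    intros; unfold thad, tadd, outer3; ring.
  - eapply sum3_outer_cycle; [now apply (sum3_outer_rbm b1 c1 a1 e1 f1 d1 b2 c2 a2 e2 f2 d2)|].
    intros; unfold thad, tadd, outer3; ring.
Qed.
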